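(* For every formula $\varphi$, if $\vdash_{\mathbf{PTKv}^{+}}\varphi$ then $\varphi$ is valid (true at every world of every model).
   Context: Fix a countable set $\mathsf{Prop}$ of propositional variables, a countable set $\mathsf{Term}$ of atomic terms, and a finite set of agents $\mathcal{A}=\{1,\dots,n\}$. Let $\Theta_K=[0,1]\cap\mathbb{Q}$ and $\Theta_V^+=(\frac12,1]\cap\mathbb{Q}$. Formulas are generated by $\varphi::= p\mid t=s\mid\neg\varphi\mid(\varphi\to\psi)\mid K_i^\theta\varphi\mid Kv_i^\eta(t)$ with $p\in\mathsf{Prop}$, $t,s\in\mathsf{Term}$, $i\in\mathcal{A}$, $\theta\in\Theta_K$, $\eta\in\Theta_V^+$; other connectives are standard abbreviations. A model is $M=(W,D,\{P_i\}_{i\in\mathcal{A}},V,\mathsf{val})$ with $W\neq\emptyset$, $D\neq\emptyset$, $P_i(w)$ a countably additive probability measure on the powerset of $W$ for each $i,w$, $V:W\times\mathsf{Prop}\to\{0,1\}$, $\mathsf{val}:W\times\mathsf{Term}\to D$. Write $\llbracket\varphi\rrbracket^M=\{u\mid M,u\models\varphi\}$ and $\llbracket t=d\rrbracket^M=\{u\mid \mathsf{val}(u,t)=d\}$. Satisfaction: $M,w\models p$ iff $V(w,p)=1$; $M,w\models t=s$ iff $\mathsf{val}(w,t)=\mathsf{val}(w,s)$; Boolean clauses as usual; $M,w\models K_i^\theta\varphi$ iff $P_i(w)(\llbracket\varphi\rrbracket^M)\ge\theta$; $M,w\models Kv_i^\eta(t)$ iff there exists a unique $d\in D$ with $P_i(w)(\llbracket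 t=d\rrbracket^M)\ge\eta$. The system $\mathbf{PTKv}^{-}$ has rules Modus Ponens and $\mathrm{Nec}_K$ (from $\varphi$ infer $K_i^\theta\varphi$, for all $i\in\mathcal{A}$, $\theta\in\Theta_K$), and axiom schemata (for all agents $i$, terms $t,s,u$, formulas $\varphi,\psi$): all propositional tautologies; $t=t$; $t=s\to s=t$; $(t=s\wedge s=u)\to t=u$; $t=s\to((t=u)\leftrightarrow(s=u))$; $K_i^{\theta'}\varphi\to K_i^\theta\varphi$ for $\theta\le\theta'$ in $\Theta_K$; $K_i^\alpha(\varphi\to\psi)\to(K_i^\beta\varphi\to K_i^{\max\{0,\alpha+\beta-1\}}\psi)$ for $\alpha,\beta\in\Theta_K$; $K_i^\alpha\varphi\to\neg K_i^\beta\neg\varphi$ for $\alpha+\beta>1$; $K_i^0\varphi$; $K_i^1(t=s)\to(K_i^\theta(t=u)\leftrightarrow K_i^\theta(s=u))$ for $\theta\in\Theta_K$; $K_i^1(t=s)\to(Kv_i^\eta(t)\leftrightarrow Kv_i^\eta(s))$ for $\eta\in\Theta_V^+$. The system $\mathbf{PTKv}^{+}$ is $\mathbf{PTKv}^{-}$ plus the schemata: $K_i^1(\varphi\leftrightarrow\psi)\to(K_i^\theta\varphi\leftrightarrow K_i^\theta\psi)$ for $\theta\in\Theta_K$; $K_i^\alpha\varphi\wedge K_i^\beta\psi\wedge K_i^1\neg(\varphi\wedge\psi)\to K_i^{\alpha+\beta}(\varphi\vee\psi)$ for $\alpha,\beta\in\Theta_K$ with $\alpha+\beta\le1$; $Kv_i^\eta(t)\to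 Kv_i^\zeta(t)$ for $\eta,\zeta\in\Theta_V^+$ with $\zeta\le\eta$. *)

From Stdlib Require Import Reals QArith Qminmax Qreals.
Open Scope R_scope.

(* Propositional variables and atomic terms: both indexed by nat (countable).
   Agents: natural numbers i with i < n (i.e. n agents, 0-based). *)
Inductive form : Type :=
| PVar : nat -> form
| Eq   : nat -> nat -> form
| Neg  : form -> form
| Imp  : form -> form -> form
| K    : nat -> Q -> form -> form
| Kv   : nat -> Q -> nat -> form.

Definition And (a b : form) : form := Neg (Imp a (Neg b)).
Definition Or  (a b : form) : form := Imp (Neg a) b.
Definition Iff (a b : form) : form := And (Imp a b) (Imp b a).

Fixpoint wf (n : nat) (f : form) : Prop :=
  match f with
  | PVar _ => True
  | Eq _ _ => True
  | Neg a => wf n a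
  | Imp a b => wf n a /\ wf n b
  | K i th a => (i < n)%nat /\ (0 <= th)%Q /\ (th <= 1)%Q /\ wf n a
  | Kv i eta _ => (i < n)%nat /\ (1 # 2 < eta)%Q /\ (eta <= 1)%Q
  end.

(* Propositional tautologies: true under every Boolean valuation of the
   non-Boolean (atomic / modal) subformulas. *)
Fixpoint beval (v : form -> bool) (f : form) : bool :=
  match f with
  | Neg a => negb (beval v a)
  | Imp a b => implb (beval v a) (beval v b)
  | _ => v f
  end.

Definition tautology (f : form) : Prop := forall v, beval v f = true.

(* Axiom schemata of PTKv^+ (= PTKv^- plus the last three). *)
Inductive axiomPTKvplus : form -> Prop :=
| ax_taut phi : tautology phi -> axiomPTKvplus phi
| ax_refl t : axiomPTKvplus (Eq t t)
| ax_sym t s : axiomPTKvplus (Imp (Eq t s) (Eq s t))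
| ax_trans t s u : axiomPTKvplus (Imp (And (Eq t s) (Eq s u)) (Eq t u))
| ax_subst t s u : axiomPTKvplus (Imp (Eq t s) (Iff (Eq t u) (Eq s u)))
| ax_mono i th th' phi : (th <= th')%Q ->
    axiomPTKvplus (Imp (K i th' phi) (K i th phi))
| ax_K i a b phi psi :
    axiomPTKvplus (Imp (K i a (Imp phi psi))
                       (Imp (K i b phi) (K i (Qmax 0 (a + b - 1)) psi)))
| ax_cons i a b phi : (1 < a + b)%Q ->
    axiomPTKvplus (Imp (K i a phi) (Neg (K i b (Neg phi))))
| ax_zero i phi : axiomPTKvplus (K i 0 phi)
| ax_eqK i th t s u :
    axiomPTKvplus (Imp (K i 1 (Eq t s)) (Iff (K i th (Eq t u)) (K i th (Eq s u))))
| ax_eqKv i eta t s :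
    axiomPTKvplus (Imp (K i 1 (Eq t s)) (Iff (Kv i eta t) (Kv i eta s)))
| ax_ext i th phi psi :
    axiomPTKvplus (Imp (K i 1 (Iff phi psi)) (Iff (K i th phi) (K i th psi)))
| ax_add i a b phi psi : (a + b <= 1)%Q ->
    axiomPTKvplus (Imp (And (And (K i a phi) (K i b psi)) (K i 1 (Neg (And phi psi))))
                       (K i (a + b) (Or phi psi)))
| ax_Kvmono i eta zeta t : (zeta <= eta)%Q ->
    axiomPTKvplus (Imp (Kv i eta t) (Kv i zeta t)).

(* Derivability in PTKv^+ (all instances range over the language for n agents,
   i.e. well-formed formulas; parameter ranges are enforced by wf). *)
Inductive provable (n : nat) : form -> Prop :=
| pr_ax phi : wf n phi -> axiomPTKvplus phi -> provable n phi
| pr_mp phi psi : provable n phi -> provable n (Imp phi psi) -> provable n psi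
| pr_nec i th phi : (i < n)%nat -> (0 <= th)%Q -> (th <= 1)%Q ->
    provable n phi -> provable n (K i th phi).

Definition is_prob_measure (W : Type) (mu : (W -> Prop) -> R) : Prop :=
  (forall A, 0 <= mu A) /\
  mu (fun _ => True) = 1 /\
  (forall A : nat -> (W -> Prop),
      (forall j k x, j <> k -> A j x -> A k x -> False) ->
      infinite_sum (fun k => mu (A k)) (mu (fun x => exists k, A k x))).

Record model := Model {
  W : Type;
  D : Type;
  W_ne : inhabited W;
  D_ne : inhabited D;
  P : nat -> W -> (W -> Prop) -> R;
  P_prob : forall i w, is_prob_measure W (P i w);
  V : W -> nat -> bool;
  val : W -> nat -> D
}.

Fixpoint sat (M : model) (w : W M) (f : form) : Prop :=
  match f with
  | PVar p => V M w p = true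
  | Eq t s => val M w t = val M w s
  | Neg a => ~ sat M w a
  | Imp a b => sat M w a -> sat M w b
  | K i th a => P M i w (fun u => sat M u a) >= Q2R th
  | Kv i eta t => exists! d : D M, P M i w (fun u => val M u t = d) >= Q2R eta
  end.

Definition valid (f : form) : Prop := forall (M : model) (w : W M), sat M w f.

(** Modus ponens and
    necessitation preserve validity (a valid formula holds on the whole space,
    which has probability 1), so it suffices that every axiom is valid.  Each
    probabilistic axiom is an elementary property of the probability measure
    [P i w]: monotonicity, complementation, finite additivity (obtained from
    countable additivity by padding with empty sets), and invariance under
    modification on a null set.  The uniqueness clause of [Kv] survives
    lowering the threshold because two disjoint events cannot both have
    probability above 1/2. *)

From Stdlib Require Import Reals QArith.
From Stdlib Require Import Qminmax Qreals RMicromega Lra Classical ClassicalEpsilon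
  FunctionalExtensionality PropExtensionality.

Open Scope R_scope.

Lemma infinite_sum_const_eq0 c l : infinite_sum (fun _ => c) l -> c = 0.
Proof.
  intro Hs. destruct (Req_dec c 0) as [|Hc]; [assumption|exfalso].
  destruct (Hs (Rabs c / 2)) as [N HN]; [apply Rabs_pos_lt in Hc; lra|].
  pose proof (HN N (le_n N)) as HN0. pose proof (HN (S N) (le_S _ _ (le_n N))) as HN1.
  unfold R_dist in *. rewrite !sum_cte, S_INR in *. rewrite S_INR in HN1.
  split_Rabs; lra.
Qed.

Lemma Q2R_max x y : Q2R (Qmax x y) = Rmax (Q2R x) (Q2R y).
Proof.
  destruct (Q.max_spec_le x y) as [[Hxy ->]|[Hyx ->]].
  - apply Qle_Rle in Hxy. now rewrite Rmax_right.
  - apply Qle_Rle in Hyx. now rewrite Rmax_left.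
Qed.

Lemma Q2R_half : Q2R (1 # 2) = / 2.
Proof. unfold Q2R; simpl; field. Qed.

Section ProbabilityMeasure.

Variables (T : Type) (mu : (T -> Prop) -> R).
Hypothesis mu_prob : is_prob_measure T mu.

Lemma measure_ext A B : (forall x, A x <-> B x) -> mu A = mu B.
Proof.
  intro AB. f_equal. apply functional_extensionality. intro x.
  apply propositional_extensionality, AB.
Qed.

Lemma measure_ge0 A : 0 <= mu A.
Proof. apply mu_prob. Qed.

Lemma measureT : mu (fun _ => True) = 1.
Proof. apply mu_prob. Qed.

Lemma measure0 : mu (fun _ => False) = 0.
Proof.
  destruct mu_prob as [_ [_ sigma_add]].
  pose proof (sigma_add (fun _ _ => False) ltac:(tauto)) as empty_sum. cbv beta in empty_sum.
  rewrite (measure_ext (fun _ => exists _ : nat, False) (fun _ => False)) in empty_sum by firstorder.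
  exact (infinite_sum_const_eq0 _ _ empty_sum).
Qed.

Lemma measureU A B : (forall x, A x -> B x -> False) ->
  mu (fun x => A x \/ B x) = mu A + mu B.
Proof.
  intro AB.
  set (F := fun k : nat => match k with 0%nat => A | 1%nat => B | _ => fun _ => False end).
  assert (F_disj : forall j k x, j <> k -> F j x -> F k x -> False).
  { intros [|[|j]] [|[|k]] x; simpl; intros; solve [contradiction | eauto]. }
  assert (partial_sums : forall m, sum_f_R0 (fun k => mu (F k)) (S m) = mu A + mu B).
  { induction m as [|m IH]; [reflexivity|].
    rewrite tech5, IH. simpl. rewrite measure0. ring. }
  assert (F_sum : infinite_sum (fun k => mu (F k)) (mu A + mu B)).
  { intros eps eps_gt0. exists 1%nat. intros [|m] Hm; [inversion Hm|].
    unfold R_dist. rewrite partial_sums, Rminus_diag, Rabs_R0. exact eps_gt0. }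
  destruct mu_prob as [_ [_ sigma_add]].
  rewrite (UL_sequence _ _ _ F_sum (sigma_add F F_disj)).
  apply measure_ext. intro x. split.
  - intros [Ax|Bx]; [exists 0%nat | exists 1%nat]; assumption.
  - intros [[|[|k]] Fx]; simpl in Fx; tauto.
Qed.

Lemma measure_split A B :
  mu A = mu (fun x => A x /\ B x) + mu (fun x => A x /\ ~ B x).
Proof.
  rewrite <- measureU by tauto. apply measure_ext. intro x.
  destruct (classic (B x)); tauto.
Qed.

Lemma le_measure A B : (forall x, A x -> B x) -> mu A <= mu B.
Proof.
  intro AB. rewrite (measure_split B A).
  rewrite (measure_ext (fun x => B x /\ A x) A) by firstorder.
  pose proof (measure_ge0 (fun x => B x /\ ~ A x)). lra.
Qed.

Lemma measure_le1 A : mu A <= 1.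
Proof. rewrite <- measureT. now apply le_measure. Qed.

Lemma measureC A : mu (fun x => ~ A x) = 1 - mu A.
Proof.
  rewrite <- measureT, (measure_ext (fun _ => True) (fun x => A x \/ ~ A x)).
  - rewrite measureU by tauto. ring.
  - intro x. pose proof (classic (A x)). tauto.
Qed.

Lemma measure_full_congr E A B : mu E >= 1 ->
  (forall x, E x -> (A x <-> B x)) -> mu A = mu B.
Proof.
  intros E_full AB.
  assert (null_off_E : forall C, mu (fun x => C x /\ ~ E x) = 0).
  { intro C.
    assert (off_E : mu (fun x => C x /\ ~ E x) <= mu (fun x => ~ E x))
      by (apply le_measure; tauto).
    pose proof (measure_ge0 (fun x => C x /\ ~ E x)).
    rewrite measureC in off_E. lra. }
  rewrite (measure_split A E), (measure_split B E), !null_off_E.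
  f_equal. apply measure_ext. firstorder.
Qed.

Lemma measure_impl A B : mu A + mu (fun x => A x -> B x) - 1 <= mu B.
Proof.
  rewrite (measure_split A (fun x => A x -> B x)).
  assert (mu (fun x => A x /\ (A x -> B x)) <= mu B) by (apply le_measure; tauto).
  assert (counterexamples : mu (fun x => A x /\ ~ (A x -> B x)) <= mu (fun x => ~ (A x -> B x)))
    by (apply le_measure; tauto).
  rewrite measureC in counterexamples. lra.
Qed.

Lemma measureU_full A B : mu (fun x => ~ (A x /\ B x)) >= 1 ->
  mu (fun x => A x \/ B x) = mu A + mu B.
Proof.
  intro AB_null.
  rewrite (measure_ext _ (fun x => A x \/ (B x /\ ~ A x))), measureU, (measure_split B A).
  - assert (overlap_null : mu (fun x => B x /\ A x) <= mu (fun x => ~ ~ (A x /\ B x)))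
      by (apply le_measure; tauto).
    pose proof (measure_ge0 (fun x => B x /\ A x)).
    rewrite measureC in overlap_null. lra.
  - tauto.
  - intro x. pose proof (classic (A x)). tauto.
Qed.

Lemma measure_disjoint_le1 A B : (forall x, A x -> B x -> False) -> mu A + mu B <= 1.
Proof. intro AB. rewrite <- measureU by assumption. apply measure_le1. Qed.

Lemma unique_heavy_value_mono (D : Type) (f : T -> D) (eta zeta : R) :
  / 2 < zeta <= eta ->
  (exists! d, mu (fun x => f x = d) >= eta) -> exists! d, mu (fun x => f x = d) >= zeta.
Proof.
  intros zeta_range [d [d_heavy _]]. exists d. split; [lra|].
  intros d' d'_heavy. apply NNPP. intro dd'.
  assert (mu (fun x => f x = d) + mu (fun x => f x = d') <= 1)
    by (apply measure_disjoint_le1; congruence).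
  lra.
Qed.

End ProbabilityMeasure.

Lemma sat_And M w a b : sat M w (And a b) <-> sat M w a /\ sat M w b.
Proof. simpl. pose proof (classic (sat M w a)). pose proof (classic (sat M w b)). tauto. Qed.

Lemma sat_Or M w a b : sat M w (Or a b) <-> sat M w a \/ sat M w b.
Proof. simpl. pose proof (classic (sat M w a)). tauto. Qed.

Lemma sat_Iff M w a b : sat M w (Iff a b) <-> (sat M w a <-> sat M w b).
Proof. unfold Iff. rewrite sat_And. simpl. tauto. Qed.

Lemma sat_tautology M w f : tautology f -> sat M w f.
Proof.
  intro f_taut.
  set (v := fun g => if excluded_middle_informative (sat M w g) then true else false).
  assert (beval_sat : forall g, beval v g = true <-> sat M w g).
  { induction g; simpl;
      try (unfold v; destruct excluded_middle_informative; intuition discriminate).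
    - rewrite Bool.negb_true_iff, <- Bool.not_true_iff_false. tauto.
    - destruct (beval v g1), (beval v g2); simpl; intuition discriminate. }
  apply beval_sat, f_taut.
Qed.

Lemma sat_K1_eq_congr M i w t s : sat M w (K i 1 (Eq t s)) ->
  forall C : D M -> W M -> Prop,
  P M i w (fun u => C (val M u t) u) = P M i w (fun u => C (val M u s) u).
Proof.
  simpl. rewrite Q2R_1. intros ts_full C.
  apply (measure_full_congr _ _ (P_prob M i w) _ _ _ ts_full).
  intros x ->. reflexivity.
Qed.

Lemma sat_K1_eq_Kv_congr M i w eta t s : sat M w (K i 1 (Eq t s)) ->
  (sat M w (Kv i eta t) <-> sat M w (Kv i eta s)).
Proof.
  intro K_ts. simpl.
  pose (mass x d := P M i w (fun u => val M u x = d)).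
  change ((exists! d, mass t d >= Q2R eta) <-> (exists! d, mass s d >= Q2R eta)).
  replace (mass t) with (mass s); [reflexivity|].
  apply functional_extensionality. intro d.
  symmetry. exact (sat_K1_eq_congr _ _ _ _ _ K_ts (fun d' _ => d' = d)).
Qed.

Lemma axiom_valid n phi : wf n phi -> axiomPTKvplus phi -> valid phi.
Proof.
  intros phi_wf phi_ax M w.
  destruct phi_ax as [phi phi_taut | t | t s | t s u | t s u | i th th' phi th_le
    | i a b phi psi | i a b phi ab_gt1 | i phi | i th t s u | i eta t s | i th phi psi
    | i a b phi psi _ | i eta zeta t zeta_le];
    cbn -[And Iff Or] in *.
  - now apply sat_tautology.
  - reflexivity.
  - congruence.
  - rewrite sat_And. simpl. intros []; congruence.
  - intro ts. apply sat_Iff. simpl. rewrite ts. reflexivity.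
  - apply Qle_Rle in th_le. lra.
  - intros K_imp K_phi. rewrite Q2R_max, Q2R_0, Q2R_minus, Q2R_plus, Q2R_1.
    apply Rle_ge, Rmax_lub; [apply measure_ge0 with (1 := P_prob M i w)|].
    pose proof (measure_impl _ _ (P_prob M i w) (fun u => sat M u phi) (fun u => sat M u psi)).
    lra.
  - intros K_phi K_neg. apply Qlt_Rlt in ab_gt1. rewrite Q2R_plus, Q2R_1 in ab_gt1.
    rewrite measureC in K_neg by apply P_prob. lra.
  - rewrite Q2R_0. apply Rle_ge, measure_ge0 with (1 := P_prob M i w).
  - intro K_ts. apply sat_Iff. simpl.
    now rewrite (sat_K1_eq_congr _ _ _ _ _ K_ts (fun d x => d = val M x u)).
  - intro K_ts. apply sat_Iff, sat_K1_eq_Kv_congr, K_ts.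
  - intro K_iff. apply sat_Iff. simpl in K_iff |- *. rewrite Q2R_1 in K_iff.
    rewrite (measure_full_congr _ _ (P_prob M i w) _ _ (fun u => sat M u psi) K_iff);
      [reflexivity|].
    intro x. apply sat_Iff.
  -
    rewrite !sat_And. simpl. rewrite Q2R_plus, Q2R_1.
    intros [[K_phi K_psi] K_excl].
    rewrite (measure_ext _ _ _ (fun u => sat M u phi \/ sat M u psi)) by (intro; apply sat_Or).
    rewrite measureU_full with (1 := P_prob M i w); [lra|].
    rewrite (measure_ext _ _ _ (fun u => ~ sat M u (And phi psi))); [exact K_excl|].
    intro x. rewrite sat_And. reflexivity.
  - destruct phi_wf as [_ [_ [zeta_gt _]]].
    apply Qle_Rle in zeta_le. apply Qlt_Rlt in zeta_gt. rewrite Q2R_half in zeta_gt.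
    apply unique_heavy_value_mono with (1 := P_prob M i w). lra.
Qed.

Theorem corollary1 (n : nat) (phi : form) : provable n phi -> valid phi.
Proof.
  induction 1 as [phi phi_wf phi_ax | phi psi _ IH_phi _ IH_imp | i th phi _ _ th_le1 _ IH].
  - exact (axiom_valid n phi phi_wf phi_ax).
  - intros M w. exact (IH_imp M w (IH_phi M w)).
  - intros M w. simpl. apply Qle_Rle in th_le1. rewrite Q2R_1 in th_le1.
    rewrite (measure_ext _ _ _ (fun _ => True)) by (intro u; split; auto using IH).
    rewrite measureT by apply P_prob. lra.
Qed.
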